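(* Let ${\bf a}=(a_1,\ldots,a_r)$ be a tuple of positive integers with $r\geq 2$. Then \[\deg({\bf B}:\mathcal W_{\bf a}\to\mathcal W_{\bf a})=\prod_{j=1}^{r-1}\left(\frac{2a_j}{a_{j+1}+a_{j+2}+\cdots+a_r+1}+1\right).\]
   Context: For finite sets $X,Y$ and $f:X\to Y$, $\deg(f)=\frac{1}{|X|}\sum_{y\in Y}|f^{-1}(y)|^2$. $\mathcal W_{\bf a}$ is the set of all words over the alphabet $\{1,\dots,r\}$ containing exactly $a_i$ copies of the letter $i$ for each $i$. For a word $w=w_1\cdots w_\ell$ and $i\in\{1,\dots,\ell-1\}$, $t_i(w)$ is obtained by swapping $w_i$ and $w_{i+1}$ if $w_i>w_{i+1}$, and $t_i(w)=w$ if $w_i\leq w_{i+1}$. Bubble sort is ${\bf B}(w)=t_{\ell-1}\circ t_{\ell-2}\circ\cdots\circ t_1(w)$, viewed as a map $\mathcal W_{\bf a}\to\mathcal W_{\bf a}$. *)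

From mathcomp Require Import all_boot all_order all_algebra.
Set Implicit Arguments. Unset Strict Implicit. Unset Printing Implicit Defensive.
Import Order.TTheory GRing.Theory Num.Theory.

(* Words over the alphabet {1,...,r} are represented as sequences of letters
   of type 'I_r, letter (k : 'I_r) standing for k+1 (order preserved). *)

Definition fdeg (T : finType) (X Y : {set T}) (f : T -> T) : rat :=
  ((#|X|%:R)^-1 * \sum_(y in Y) (#|[set x in X | f x == y]|%:R) ^+ 2)%R.

(* t_i, 1-indexed position i: swap w_i and w_{i+1} if w_i > w_{i+1}. *)
Definition tswap (A : eqType) (le : A -> A -> bool) (x0 : A) (i : nat) (w : seq A) : seq A :=
  let a := nth x0 w i.-1 in let b := nth x0 w i in
  if (i.-1 < size w) && (i < size w) && ~~ le a b
  then set_nth x0 (set_nth x0 w i.-1 b) i a else w.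

Definition bubble (A : eqType) (le : A -> A -> bool) (x0 : A) (w : seq A) : seq A :=
  foldl (fun u i => tswap le x0 i u) w (iota 1 (size w).-1).


(* W_a : words of length a_1+...+a_r with exactly a_i copies of letter i.
   a is given as a sequence of size r (a`_k = a_{k+1}). *)
Definition Wa (r : nat) (a : seq nat) : {set (sumn a).-tuple 'I_r} :=
  [set w : (sumn a).-tuple 'I_r | [forall k : 'I_r, count_mem k w == nth 0 a k]].

Lemma size_bubble (A : eqType) le (x0 : A) w : size (bubble le x0 w) = size w.
Proof.
rewrite /bubble; move: (iota _ _) => s0; elim: s0 w => //= i s IH w; rewrite IH /tswap.
case: ifP => // /andP[/andP[h1 h2] _]; rewrite !size_set_nth.
by rewrite (maxn_idPr h1) (maxn_idPr h2).
Qed.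

Lemma bubbleT_proof (r n : nat) (w : n.-tuple 'I_r.+1) :
  size (bubble (fun x y : 'I_r.+1 => (x <= y)%N) ord0 w) == n.
Proof. by rewrite size_bubble size_tuple. Qed.

Definition bubbleT (r n : nat) (w : n.-tuple 'I_r) : n.-tuple 'I_r :=
  match r return n.-tuple 'I_r -> n.-tuple 'I_r with
  | 0 => fun w => w
  | r'.+1 => fun w => @Tuple n _ (bubble (fun x y : 'I_r'.+1 => (x <= y)%N) ord0 w)
                (bubbleT_proof w)
  end w.

(* Split a word into the 0/1 mask of the positions of its smallest letter and
   the subword of its other letters.  One pass of bubble sort acts on the two
   parts independently: on the subword it is again one pass, and on the mask it
   moves the first position not holding the smallest letter to the end.  Hence
   the number of ordered pairs of words with equal images, which is
   |W_a| deg(B), factors over the letters.  For a letter with multiplicity k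
   followed by N > 0 larger letters, the mask fibre over [rcons d false] has
   (number of leading [true]s of d) + 1 elements, and the sum of the squares
   of these fibre sizes is C(k+N, k) (2k/(N+1) + 1), where C(k+N, k) is the
   number of masks. *)

From mathcomp Require Import all_boot all_order all_algebra.
From mathcomp Require Import zify ring.
Import GRing.Theory Num.Theory.
Set Implicit Arguments. Unset Strict Implicit. Unset Printing Implicit Defensive.

Section BubblePass.
Variables (A : eqType) (le : A -> A -> bool).

Fixpoint bubble_from (c : A) (s : seq A) : seq A :=
  if s is y :: s' then
    if le c y then c :: bubble_from y s' else y :: bubble_from c s'
  else [:: c].

Definition bubble_pass (s : seq A) : seq A :=
  if s is c :: s' then bubble_from c s' else [::].

Lemma tswap_cons x0 i z u :
  (0 < i)%N -> tswap le x0 i.+1 (z :: u) = z :: tswap le x0 i u.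
Proof. by case: i => // i _; rewrite /tswap /=; case: ifP. Qed.

Lemma foldl_tswap_cons x0 n i z u : (0 < i)%N ->
  foldl (fun w j => tswap le x0 j w) (z :: u) (iota i.+1 n) =
  z :: foldl (fun w j => tswap le x0 j w) u (iota i n).
Proof. by elim: n i z u => //= n IH i z u i_gt0; rewrite tswap_cons // IH. Qed.

Lemma bubbleE x0 s : bubble le x0 s = bubble_pass s.
Proof.
case: s => //= c s; rewrite /bubble /=.
elim: s c => //= y s IH c.
have -> : tswap le x0 1 [:: c, y & s] = if le c y then [:: c, y & s] else [:: y, c & s].
  by rewrite /tswap /=; case: (le c y).
by case: (le c y); rewrite foldl_tswap_cons // IH.
Qed.

Lemma perm_bubble_from c s : perm_eq (bubble_from c s) (c :: s).
Proof.
elim: s c => //= y s IH c; case: ifP => _; first by rewrite perm_cons.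
by rewrite perm_sym (perm_catCA [:: c] [:: y]) /= perm_cons perm_sym.
Qed.

Lemma perm_bubble_pass s : perm_eq (bubble_pass s) s.
Proof. by case: s => //= c s; apply: perm_bubble_from. Qed.

Lemma bubble_from_min c s : le c (head c s) -> bubble_from c s = c :: bubble_pass s.
Proof. by case: s => //= y s ->. Qed.

End BubblePass.

Lemma map_bubble_pass (A B : eqType) (le : A -> A -> bool) (le' : B -> B -> bool)
    (f : A -> B) :
  (forall x y, le' (f x) (f y) = le x y) ->
  forall s, map f (bubble_pass le s) = bubble_pass le' (map f s).
Proof.
move=> f_mono [|c s] //=.
by elim: s c => //= y s IH c; rewrite f_mono; case: ifP => _ /=; rewrite IH.
Qed.

Definition collisions (T : Type) (U : eqType) (f : T -> U) (s : seq T) : nat :=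
  \sum_(x <- s) \sum_(x' <- s) (f x == f x' : nat).

Lemma collisions1 (T : Type) (U : eqType) (f : T -> U) x : collisions f [:: x] = 1.
Proof. by rewrite /collisions !big_seq1 eqxx. Qed.

Lemma eq_collisions (T : Type) (U V : eqType) (f : T -> U) (g : T -> V) s :
  (forall x x', (f x == f x') = (g x == g x')) -> collisions f s = collisions g s.
Proof.
by move=> fg; apply: eq_bigr => x _; apply: eq_bigr => x' _; rewrite fg.
Qed.

Lemma collisions_map (S T : Type) (U : eqType) (f : T -> U) (g : S -> T) s :
  collisions f (map g s) = collisions (f \o g) s.
Proof. by rewrite /collisions big_map; apply: eq_bigr => x _; rewrite big_map. Qed.

Lemma perm_collisions (T U : eqType) (f : T -> U) s t :
  perm_eq s t -> collisions f s = collisions f t.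
Proof.
move=> st; rewrite /collisions (perm_big _ st).
by apply: eq_bigr => x _; apply: perm_big.
Qed.

Lemma collisions_fibers (T U : eqType) (f : T -> U) s (Y : seq U) :
  uniq Y -> {in s, forall x, f x \in Y} ->
  collisions f s = \sum_(y <- Y) count (fun x => f x == y) s ^ 2.
Proof.
move=> uY fY.
have countE y : count (fun x => f x == y) s = \sum_(x <- s) (f x == y : nat).
  by rewrite -sum1_count big_mkcond; apply: eq_bigr => x _; case: eqP.
under [RHS]eq_bigr => y _ do rewrite countE expnS expn1 big_distrl /=.
under [RHS]eq_bigr => y _ do under eq_bigr => x _ do rewrite big_distrr /=.
rewrite [RHS]exchange_big /= /collisions big_seq [RHS]big_seq.
apply: eq_bigr => x sx; rewrite [RHS]exchange_big /=; apply: eq_bigr => x' _.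
rewrite (big_rem (f x)) ?fY //= eqxx mul1n big_seq big1 ?addn0 ?(eq_sym (f x')) // => y.
by case: eqP => // <-; rewrite mem_rem_uniqF.
Qed.

Lemma collisions_allpairs (S T U V W X : eqType)
    (op : S -> T -> U) (f : U -> V) (g : S -> W) (h : T -> X) s t :
  (forall x x' y y', x \in s -> x' \in s -> y \in t -> y' \in t ->
     (f (op x y) == f (op x' y')) = (g x == g x') && (h y == h y')) ->
  collisions f [seq op x y | x <- s, y <- t] = collisions g s * collisions h t.
Proof.
move=> fgh; rewrite /collisions big_allpairs_dep big_distrl /=.
apply: eq_big_seq => x sx; under eq_bigr => y _ do rewrite big_allpairs_dep.
rewrite exchange_big big_distrl /=; apply: eq_big_seq => x' sx'.
rewrite big_distrr /=; apply: eq_big_seq => y ty.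
rewrite big_distrr /=; apply: eq_big_seq => y' ty'.
by rewrite fgh //; do 2!case: eqP.
Qed.

Fixpoint masks (n k : nat) : seq (seq bool) :=
  if n is n'.+1 then
    (if k is k'.+1 then [seq true :: b | b <- masks n' k'] else [::])
    ++ [seq false :: b | b <- masks n' k]
  else if k is 0 then [:: [::]] else [::].

Lemma masksS n k : masks n.+1 k.+1 =
  [seq true :: b | b <- masks n k] ++ [seq false :: b | b <- masks n k.+1].
Proof. by []. Qed.

Lemma masks0 n : masks n 0 = [:: nseq n false].
Proof. by elim: n => //= n ->. Qed.

Lemma mem_cons_map (T : eqType) (y : T) (s : seq T) (r : seq (seq T)) :
  (s \in [seq y :: t | t <- r]) = if s is x :: s' then (x == y) && (s' \in r) else false.
Proof.
case: s => [|x s]; first by apply/mapP => -[].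
apply/mapP/andP => [[t tr [-> ->]]|[/eqP -> sr]]; first by rewrite eqxx.
by exists s.
Qed.

Lemma mem_masks n k b : (b \in masks n k) = (size b == n) && (count id b == k).
Proof.
elim: n k b => [|n IH] [|k] [|[] b] //=.
all: by rewrite ?mem_cat ?mem_seq1 // !mem_cons_map /= ?IH ?add1n ?andbF ?orbF.
Qed.

Lemma uniq_masks n k : uniq (masks n k).
Proof.
elim: n k => [|n IH] [|k] //=; rewrite ?cat_uniq !map_inj_uniq ?IH //= ?andbT;
  try by move=> ? ? [].
by apply/hasP => -[_ /mapP[? _ ->] /mapP[]].
Qed.

Lemma size_masks n k : size (masks n k) = 'C(n, k).
Proof.
by elim: n k => [|n IH] [|k] //=; rewrite ?size_cat !size_map !IH ?binS ?bin0 // addnC.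
Qed.

Lemma masks_nn n : masks n n = [:: nseq n true].
Proof.
elim: n => //= n ->; have /nilP -> : nilp (masks n n.+1).
  by rewrite /nilp size_masks bin_small.
by [].
Qed.

Lemma count_negb_masks n k b : b \in masks n k -> count negb b = n - k.
Proof.
by rewrite mem_masks => /andP[/eqP <- /eqP <-]; rewrite -(count_predC id b) addKn.
Qed.

(* [true] marks the smallest letter, so it is the smaller value here. *)
Definition mask_pass : seq bool -> seq bool := bubble_pass (fun x y => y ==> x).
Arguments mask_pass : simpl never.

Lemma perm_mask_pass b : perm_eq (mask_pass b) b.
Proof. exact: perm_bubble_pass. Qed.

Lemma mask_pass_true b : mask_pass (true :: b) = true :: mask_pass b.
Proof. by rewrite /mask_pass /= bubble_from_min // implybT. Qed.

Lemma mask_pass_false b : mask_pass (false :: b) = rcons b false.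
Proof. by rewrite /mask_pass /=; elim: b => //= -[] b ->. Qed.

Lemma mask_pass_rem b : false \in b -> mask_pass b = rcons (rem false b) false.
Proof.
elim: b => // -[] b IH; rewrite ?mask_pass_true ?mask_pass_false //=.
by rewrite in_cons => /IH ->.
Qed.

(* The preimages of [rcons d false] arise by inserting [false] into [d] at any
   position up to its first [false]. *)
Lemma count_mask_pass_fiber d :
  count (fun b => mask_pass b == rcons d false) (masks (size d).+1 (count id d)) =
  (find negb d).+1.
Proof.
have count_pred1 n k b : b \in masks n k -> count (pred1 b) (masks n k) = 1.
  by move=> bnk; rewrite count_uniq_mem ?uniq_masks ?bnk.
elim: d => [//|[] d IH].
- rewrite masksS count_cat !count_map.
  rewrite (@eq_count _ _ (fun b => mask_pass b == rcons d false)) ?IH; last first.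
    by move=> b /=; rewrite mask_pass_true -rcons_cons eqseq_cons eqxx.
  rewrite (@eq_count _ _ (pred1 (true :: d))) ?count_pred1 ?mem_masks ?eqxx ?addn1 //.
  by move=> b /=; rewrite mask_pass_false -rcons_cons eqseq_rcons eqxx andbT.
- have -> : masks (size (false :: d)).+1 (count id (false :: d)) =
    (if count id d is k.+1 then [seq true :: b | b <- masks (size d).+1 k] else [::])
    ++ [seq false :: b | b <- masks (size d).+1 (count id d)] by [].
  rewrite count_cat [X in X + _](_ : _ = 0); last first.
    case: (count id d) => // k; rewrite count_map (@eq_count _ _ pred0) ?count_pred0 // => b.
    by rewrite /= mask_pass_true -rcons_cons eqseq_cons.
  rewrite count_map (@eq_count _ _ (pred1 (false :: d))) ?count_pred1 ?mem_masks ?eqxx //.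
  by move=> b; rewrite /= mask_pass_false -rcons_cons eqseq_rcons eqxx andbT.
Qed.

Lemma collisions_mask_pass_fibers k M :
  collisions mask_pass (masks (k + M).+1 k) =
  \sum_(d <- masks (k + M) k) (find negb d).+1 ^ 2.
Proof.
rewrite (@collisions_fibers _ _ _ _ [seq rcons d false | d <- masks (k + M) k]).
- rewrite big_map; apply: eq_big_seq => d.
  by rewrite mem_masks => /andP[/eqP <- /eqP <-]; rewrite count_mask_pass_fiber.
- by rewrite map_inj_uniq ?uniq_masks // => d d' /rcons_inj[].
move=> b; rewrite mem_masks => /andP[/eqP size_b /eqP count_b].
have b_false : false \in b.
  apply: contraT => /count_memPn b_true; move: (count_predC id b).
  rewrite (@eq_count _ (predC id) (pred1 false)) ?b_true; last by case.
  by rewrite size_b count_b; lia.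
rewrite mask_pass_rem //; apply: (map_f (rcons^~ false)).
rewrite mem_masks size_rem // size_b eqxx /=.
by rewrite -count_b (permP (perm_to_rem b_false)) /=.
Qed.

Lemma sum_find_masks k M :
  \sum_(d <- masks (k + M) k) (find negb d).+1 = 'C((k + M).+1, k).
Proof.
elim: k => [|k IH]; first by rewrite masks0 big_seq1 bin0 find_nseq.
rewrite addSn masksS big_cat !big_map /=.
under eq_bigr => d _ do rewrite -addn1.
rewrite big_split /= IH !sum1_size !size_masks.
by rewrite [in RHS]binS [in RHS]binS; lia.
Qed.

Lemma sum_find_sq_masks k M :
  (\sum_(d <- masks (k + M) k) (find negb d).+1 ^ 2) * M.+2 =
  (2 * k + M.+2) * 'C((k + M).+1, k).
Proof.
elim: k => [|k IH].
  by rewrite masks0 big_seq1 bin0 find_nseq muln1 mul1n.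
rewrite addSn masksS big_cat !big_map /=.
have sq_succ n : n.+1 ^ 2 = n ^ 2 + 2 * n + 1 by rewrite -addn1 sqrnD muln1 exp1n addnAC.
under [X in _ + X]eq_bigr => d _ do rewrite exp1n.
under eq_bigr => d _ do rewrite sq_succ.
rewrite !big_split /= -big_distrr /= sum_find_masks !sum1_size !size_masks.
have pascal := binS (k + M) k; have pascalS := binS (k + M).+1 k.
have absorb := mul_bin_left (k + M).+1 k; rewrite subSn ?leq_addr // addKn in absorb.
nia.
Qed.

Lemma collisions_mask_pass (R : numFieldType) k N : (0 < N)%N ->
  ((collisions mask_pass (masks (k + N) k))%:R =
   'C(k + N, k)%:R * (2 * k%:R / N.+1%:R + 1) :> R)%R.
Proof.
case: N => // M _; have M2_neq0 : (M.+2%:R != 0 :> R)%R by rewrite pnatr_eq0.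
apply: (mulIf M2_neq0); rewrite addnS collisions_mask_pass_fibers -[LHS]natrM.
rewrite sum_find_sq_masks -addnS natrM natrD natrM; field.
by rewrite -natrD pnatr_eq0.
Qed.

Fixpoint fill (m : nat) (b : seq bool) (v : seq nat) : seq nat :=
  if b is x :: b' then
    if x then m :: fill m b' v else head 0 v :: fill m b' (behead v)
  else [::].

Lemma perm_fill m b v :
  size v = count negb b -> perm_eq (fill m b v) (nseq (count id b) m ++ v).
Proof.
elim: b v => [|[] b IH] v /=; first by case: v.
  by move=> /IH; rewrite perm_cons.
case: v => //= y v [/IH]; rewrite -(perm_cons y) => /perm_trans; apply.
by rewrite perm_sym (perm_catCA _ [:: y]).
Qed.

Lemma fill_mask m s : fill m (map (pred1 m) s) (filter (predC1 m) s) = s.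
Proof. by elim: s => //= x s IH; case: eqP => [->|] /=; rewrite IH. Qed.

Lemma map_fill m b v :
  all (fun x => m < x) v -> size v = count negb b -> map (pred1 m) (fill m b v) = b.
Proof.
elim: b v => [|[] b IH] v //= m_v; first by rewrite eqxx => /IH ->.
case: v m_v => //= y v /andP[m_y m_v] [/(IH _ m_v) ->].
by rewrite (gtn_eqF m_y).
Qed.

Lemma filter_fill m b v :
  all (fun x => m < x) v -> size v = count negb b -> filter (predC1 m) (fill m b v) = v.
Proof.
elim: b v => [|[] b IH] v //= m_v; first by case: v m_v.
  by rewrite eqxx => /IH ->.
case: v m_v => //= y v /andP[m_y m_v] [/(IH _ m_v) ->].
by rewrite (gtn_eqF m_y).
Qed.

Lemma eq_fill m b v b' v' :
  all (fun x => m < x) v -> size v = count negb b ->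
  all (fun x => m < x) v' -> size v' = count negb b' ->
  (fill m b v == fill m b' v') = (b == b') && (v == v').
Proof.
move=> m_v size_v m_v' size_v'; apply/eqP/andP => [e|[/eqP -> /eqP ->] //].
split; apply/eqP.
  by rewrite -(map_fill m_v size_v) e map_fill.
by rewrite -(filter_fill m_v size_v) e filter_fill.
Qed.

Lemma bubble_from_fill m c b u :
  m < c -> all (fun x => m < x) u -> size u = count negb b ->
  bubble_from leq c (fill m b u) = fill m (rcons b false) (bubble_from leq c u).
Proof.
elim: b c u => [|[] b IH] c u m_c m_u /=; first by case: u m_u.
  by move=> size_u; rewrite leqNgt m_c /= IH.
case: u m_u => //= y u /andP[m_y m_u] [size_u].
by case: ifP => _ /=; rewrite IH.
Qed.

Lemma bubble_pass_fill m b v :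
  all (fun x => m < x) v -> size v = count negb b ->
  bubble_pass leq (fill m b v) = fill m (mask_pass b) (bubble_pass leq v).
Proof.
elim: b v => [|[] b IH] v m_v /=; first by case: v m_v.
  move=> size_v; rewrite mask_pass_true /= -IH // bubble_from_min //.
  have : all (leq m) (fill m b v).
    rewrite (perm_all _ (perm_fill m size_v)) all_cat all_nseq leqnn orbT /=.
    by apply: sub_all m_v => x /ltnW.
  by case: (fill m b v) => //= x s /andP[].
case: v m_v => //= y v /andP[m_y m_v] [size_v].
by rewrite mask_pass_false bubble_from_fill.
Qed.

Fixpoint sorted_word (m : nat) (a : seq nat) : seq nat :=
  if a is k :: a' then nseq k m ++ sorted_word m.+1 a' else [::].

Lemma size_sorted_word m a : size (sorted_word m a) = sumn a.
Proof. by elim: a m => //= k a IH m; rewrite size_cat size_nseq IH. Qed.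

Lemma count_sorted_word m a x :
  count_mem x (sorted_word m a) = if m <= x then nth 0 a (x - m) else 0.
Proof.
elim: a m => [|k a IH] m /=; first by rewrite nth_nil; case: ifP.
rewrite count_cat count_nseq IH /= eq_sym.
case: (ltngtP m x) => [m_x|x_m|<-]; rewrite ?subnn ?mul1n ?addn0 //.
by rewrite mul0n add0n -(subnSK m_x).
Qed.

Lemma sorted_word_ge m a : all (leq m) (sorted_word m a).
Proof.
elim: a m => //= k a IH m; rewrite all_cat all_nseq leqnn orbT /=.
by apply: sub_all (IH m.+1) => x /ltnW.
Qed.

Lemma sorted_word_lt m a : all (fun x => x < m + size a) (sorted_word m a).
Proof.
elim: a m => //= k a IH m; rewrite all_cat all_nseq addnS ltnS leq_addr orbT /=.
by rewrite -addSn IH.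
Qed.

Fixpoint words (m : nat) (a : seq nat) : seq (seq nat) :=
  if a is k :: a' then
    [seq fill m b v | b <- masks (k + sumn a') k, v <- words m.+1 a']
  else [:: [::]].

Lemma mem_words m a s : (s \in words m a) = perm_eq s (sorted_word m a).
Proof.
elim: a m s => [|k a IH] m s /=.
  by rewrite mem_seq1; apply/eqP/perm_nilP.
apply/allpairsP/idP => [[[b v] /= [b_mask] /[!IH] v_sorted ->]|s_sorted].
  have size_v : size v = count negb b.
    by rewrite (perm_size v_sorted) size_sorted_word (count_negb_masks b_mask) addKn.
  apply: perm_trans (perm_fill m size_v) _.
  by move: b_mask; rewrite mem_masks => /andP[_ /eqP ->]; rewrite perm_cat2l.
have m_notin : m \notin sorted_word m.+1 a.
  by apply/negP => /(allP (sorted_word_ge m.+1 a)); rewrite ltnn.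
exists (map (pred1 m) s, filter (predC1 m) s); split => /=; last by rewrite fill_mask.
  rewrite mem_masks size_map (perm_size s_sorted) size_cat size_nseq size_sorted_word.
  rewrite eqxx count_map (permP s_sorted) count_cat count_nseq /= eqxx mul1n.
  by rewrite (count_memPn m_notin) addn0.
rewrite IH; apply: perm_trans (perm_filter _ s_sorted) _.
rewrite filter_cat filter_nseq /= eqxx mul0n /=.
by rewrite (all_filterP _) // all_predC has_pred1.
Qed.

Lemma masks_words_fill_cond m k a b v :
  b \in masks (k + sumn a) k -> v \in words m.+1 a ->
  all (fun x => m < x) v /\ size v = count negb b.
Proof.
rewrite mem_words => b_mask v_sorted; split.
  by rewrite (perm_all _ v_sorted) sorted_word_ge.
by rewrite (perm_size v_sorted) size_sorted_word (count_negb_masks b_mask) addKn.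
Qed.

Lemma uniq_words m a : uniq (words m a).
Proof.
elim: a m => //= k a IH m; apply: allpairs_uniq; rewrite ?uniq_masks //.
move=> [b v] [b' v'] /allpairsP[[? ?] /= [b_mask v_word [-> ->]]].
move=> /allpairsP[[? ?] /= [b'_mask v'_word [-> ->]]] /= /eqP.
have [m_v size_v] := masks_words_fill_cond b_mask v_word.
have [m_v' size_v'] := masks_words_fill_cond b'_mask v'_word.
by rewrite eq_fill // => /andP[/eqP -> /eqP ->].
Qed.

Lemma size_words_cons m k a :
  size (words m (k :: a)) = 'C(k + sumn a, k) * size (words m.+1 a).
Proof. by rewrite size_allpairs size_masks. Qed.

Lemma size_words_gt0 m a : 0 < size (words m a).
Proof. by rewrite -has_predT; apply/hasP; exists (sorted_word m a); rewrite ?mem_words. Qed.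

Lemma collisions_words_cons m k a :
  collisions (bubble_pass leq) (words m (k :: a)) =
  collisions mask_pass (masks (k + sumn a) k) * collisions (bubble_pass leq) (words m.+1 a).
Proof.
apply: collisions_allpairs => b b' v v' b_mask b'_mask v_word v'_word.
have [m_v size_v] := masks_words_fill_cond b_mask v_word.
have [m_v' size_v'] := masks_words_fill_cond b'_mask v'_word.
have perm_v := perm_bubble_pass leq v; have perm_v' := perm_bubble_pass leq v'.
rewrite !bubble_pass_fill // eq_fill // ?(perm_all _ perm_v) ?(perm_all _ perm_v') //.
  by rewrite (perm_size perm_v) (permP (perm_mask_pass b)).
by rewrite (perm_size perm_v') (permP (perm_mask_pass b')).
Qed.

Local Open Scope ring_scope.

Lemma collisions_words (R : numFieldType) m a : all (fun x => 0 < x)%N a ->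
  (collisions (bubble_pass leq) (words m a))%:R =
  (size (words m a))%:R *
  \prod_(0 <= j < (size a).-1) (2 * (nth 0 a j)%:R / (sumn (drop j.+1 a)).+1%:R + 1) :> R.
Proof.
elim: a m => [|k a IH] m; first by rewrite collisions1 big_geq ?mulr1.
move=> /andP[_ a_gt0]; rewrite collisions_words_cons size_words_cons !natrM.
case: a IH a_gt0 => [|k' a] IH a_gt0.
  by rewrite addn0 masks_nn !collisions1 binn big_geq ?mulr1.
rewrite collisions_mask_pass; last by case/andP: a_gt0 => k'_gt0 _; rewrite addn_gt0 k'_gt0.
by rewrite IH // big_nat_recl // mulrACA.
Qed.

Lemma map_val_bubbleT r n (x : n.-tuple 'I_r.+1) :
  map val (bubbleT x) = bubble_pass leq (map val x).
Proof. by rewrite /= bubbleE; apply: map_bubble_pass. Qed.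

Lemma mem_Wa r a (x : (sumn a).-tuple 'I_r) :
  size a = r -> (x \in Wa r a) = perm_eq (map val x) (sorted_word 0 a).
Proof.
move=> size_a; rewrite inE; apply/forallP/idP => [count_x | /permP count_x k].
  apply/allP => y _; apply/eqP; rewrite count_sorted_word subn0 count_map /=.
  have [y_r | r_y] := ltnP y r.
    rewrite -(eqP (count_x (Ordinal y_r))); apply: eq_count => z.
    by rewrite /= -val_eqE.
  rewrite nth_default ?size_a // (@eq_count _ _ pred0) ?count_pred0 // => z /=.
  by rewrite ltn_eqF // (leq_trans (ltn_ord z) r_y).
have := count_x (pred1 (val k)); rewrite count_map count_sorted_word subn0 /= => <-.
by apply/eqP/eq_count => z; rewrite /= val_eqE.
Qed.

Lemma perm_Wa_words r a : size a = r.+1 ->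
  perm_eq [seq map val x | x : (sumn a).-tuple _ <- enum (Wa r.+1 a)] (words 0 a).
Proof.
move=> size_a; apply: uniq_perm; rewrite ?uniq_words //.
  by rewrite map_inj_uniq ?enum_uniq // => x y /(inj_map val_inj)/val_inj.
move=> s; rewrite mem_words; apply/mapP/idP => [[x] | s_sorted].
  by rewrite mem_enum (mem_Wa _ size_a) => ? ->.
have size_s : size (map inord s : seq 'I_r.+1) == sumn a.
  by rewrite size_map (perm_size s_sorted) size_sorted_word.
have val_s : map val (Tuple size_s) = s.
  rewrite /= -map_comp -[RHS]map_id; apply/eq_in_map => y /=.
  by rewrite (perm_mem s_sorted) => /(allP (sorted_word_lt 0 a)); rewrite size_a; apply: inordK.
by exists (Tuple size_s); rewrite // mem_enum (mem_Wa _ size_a) val_s.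
Qed.

Lemma fdeg_collisions (T : finType) (X : {set T}) (f : T -> T) :
  {in X, forall x, f x \in X} -> fdeg X X f = #|X|%:R^-1 * (collisions f (enum X))%:R.
Proof.
move=> fX; rewrite /fdeg (@collisions_fibers _ _ _ _ (enum X)) ?enum_uniq //; last first.
  by move=> x; rewrite !mem_enum; apply: fX.
rewrite natr_sum big_enum /=; congr (_ * _); apply: eq_bigr => y _.
rewrite natrX -sum1_card -sum1_count big_enum_cond /=.
by congr (_ %:R ^+ 2); apply: eq_bigl => x; rewrite inE.
Qed.

Lemma sumn_drop j a : sumn (drop j a) = (\sum_(j <= k < size a) nth 0 a k)%N.
Proof.
rewrite sumnE (big_nth 0) size_drop -[in RHS](add0n j) big_addn.
by apply: eq_bigr => i _; rewrite nth_drop addnC.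
Qed.

Theorem mainTheorem9 (r : nat) (a : seq nat) :
  (2 <= r)%N -> size a = r -> all (fun x => 0 < x)%N a ->
  fdeg (Wa r a) (Wa r a) (@bubbleT r (sumn a)) =
  \prod_(0 <= j < r.-1)
     ((2 * (nth 0%N a j)%:R) / ((\sum_(j.+1 <= k < r) nth 0%N a k)%N.+1%:R) + 1 : rat).
Proof.
case: r => // r _ size_a a_gt0.
have Wa_words := perm_Wa_words size_a.
rewrite fdeg_collisions; last first.
  move=> x; rewrite !(mem_Wa _ size_a) map_val_bubbleT.
  exact: perm_trans (perm_bubble_pass _ _).
have -> : collisions (@bubbleT r.+1 (sumn a)) (enum (Wa r.+1 a)) =
          collisions (bubble_pass leq) (words 0 a).
  rewrite -(perm_collisions _ Wa_words) collisions_map.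
  by apply: eq_collisions => x y /=; rewrite -!map_val_bubbleT (inj_eq (inj_map val_inj)).
have card_Wa : #|Wa r.+1 a| = size (words 0 a).
  by rewrite -(perm_size Wa_words) size_map cardE.
rewrite collisions_words // card_Wa mulKf ?pnatr_eq0 -?lt0n ?size_words_gt0 // size_a.
by apply: eq_bigr => j _; rewrite sumn_drop size_a.
Qed.
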